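(* Let $R$ be a ring and $n\in\{0,1,2,\dots\}\cup\{\infty\}$. (1) The following are equivalent: (a) $l.\mathrm{fPD}(R)\leq n$; (b) every $(n+1)$-projective left $R$-module is $n$-projective; (c) for some $m>n$, every $m$-projective left $R$-module is $n$-projective; (d) for every $m>n$, every $m$-projective left $R$-module is $n$-projective; (e) every $\infty$-projective left $R$-module is $n$-projective. (2) The following are equivalent: (a) $R$ is left coherent and every finitely presented left $R$-module has projective dimension $<n+1$; (b) every pure projective left $R$-module is $n$-projective.
   Context: $R$ is an associative ring with identity; modules are left $R$-modules; $\infty+1=\infty$. For a positive integer $k$, $\mathcal{P}^{<k}$ is the class of modules $M$ admitting an exact sequence $0\to P_j\to\cdots\to P_0\to M\to 0$ with $j\le k-1$ and every $P_i$ finitely generated projective; $\mathcal{P}^{<\infty}$ is the class of modules admitting such a sequence for some finite $j$. $l.\mathrm{fPD}(R)$ is the supremum of projective dimensions of modules in $\mathcal{P}^{<\infty}$. A short exact sequence $0\to A\to B\to C\to 0$ is $n$-exact if $0\to\mathrm{Hom}_R(M,A)\to\mathrm{Hom}_R(M,B)\to\mathrm{Hom}_R(M,C)\to0$ is exact for all $M\in\mathcal{P}^{<n+1}$. A module $P$ is $n$-projective if $\mathrm{Hom}_R(P,-)$ preserves exactness of every $n$-exact sequence. A module is pure projective if $\mathrm{Hom}_R(P,-)$ preserves exactness of every pure exact sequence (equivalently, it is a direct summand of a direct sum of finitely presented modules). *)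

(* left R-modules are lmodType R over an arbitrary
   (possibly non-commutative) ring R : pzRingType. *)
From HB Require Import structures.
From mathcomp Require Import all_boot all_order all_algebra.
Set Implicit Arguments. Unset Strict Implicit. Unset Printing Implicit Defensive.
Import GRing.Theory.
Local Open Scope ring_scope.

(* Extended naturals {0,1,2,...} ∪ {∞}: Some k = k, None = ∞. *)
Definition natinf := option nat.
Definition succinf (n : natinf) : natinf := option_map S n.
(* "m > n" on extended naturals, read as m >= n+1 with ∞+1 = ∞. *)
Definition gt_inf (m n : natinf) : Prop :=
  match n, m with
  | None, None => True
  | None, Some _ => False
  | Some _, None => True
  | Some a, Some b => (a < b)%N
  end.

Definition surjective {A B : Type} (f : A -> B) : Prop :=
  forall y, exists x, f x = y.

Section Modules.
Variable R : pzRingType.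

Definition exact_at (U V W : lmodType R) (f : U -> V) (g : V -> W) : Prop :=
  (forall x, g (f x) = 0) /\ (forall y, g y = 0 -> exists x, f x = y).

Definition short_exact (A B C : lmodType R) (f : {linear A -> B})
  (g : {linear B -> C}) : Prop :=
  injective f /\ exact_at f g /\ surjective g.

Definition hom_exact (M A B C : lmodType R) (f : {linear A -> B})
  (g : {linear B -> C}) : Prop :=
  (forall h1 h2 : {linear M -> A}, (forall x, f (h1 x) = f (h2 x)) ->
       forall x, h1 x = h2 x)
  /\ (forall h : {linear M -> B}, (forall x, g (h x) = 0) ->
       exists k : {linear M -> A}, forall x, f (k x) = h x)
  /\ (forall h : {linear M -> C},
       exists k : {linear M -> B}, forall x, g (k x) = h x).

Definition projective (P : lmodType R) : Prop :=
  forall (B C : lmodType R) (g : {linear B -> C}), surjective g ->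
  forall h : {linear P -> C}, exists k : {linear P -> B}, forall x, g (k x) = h x.

Definition fin_gen (M : lmodType R) : Prop :=
  exists s : seq M, forall x : M, exists r : 'I_(size s) -> R,
    x = \sum_(i < size s) r i *: s`_i.

Definition fg_projective (M : lmodType R) : Prop := projective M /\ fin_gen M.

Definition fin_pres (M : lmodType R) : Prop :=
  exists s : seq M,
    (forall x : M, exists r : 'I_(size s) -> R,
        x = \sum_(i < size s) r i *: s`_i) /\
    exists rels : seq ('I_(size s) -> R),
      (forall k : 'I_(size rels),
         \sum_(i < size s) (nth (fun _ => 0) rels k) i *: s`_i = 0) /\
      (forall r : 'I_(size s) -> R, \sum_(i < size s) r i *: s`_i = 0 ->
         exists c : 'I_(size rels) -> R,
           forall i, r i = \sum_(k < size rels) c k * (nth (fun _ => 0) rels k) i).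

Definition resolution (Q : lmodType R -> Prop) (j : nat) (M : lmodType R) : Prop :=
  exists (P : nat -> lmodType R) (d : forall i, {linear P i.+1 -> P i})
         (e : {linear P 0%N -> M}),
    (forall i, (i <= j)%N -> Q (P i)) /\
    surjective e /\
    (if j is j'.+1 then
       exact_at (d 0%N) e /\
       (forall i, (i.+1 < j)%N -> exact_at (d i.+1) (d i)) /\
       injective (d j')
     else injective e).

Definition pd_le (M : lmodType R) (k : nat) : Prop :=
  exists j, (j <= k)%N /\ resolution projective j M.

Definition pd_le_inf (M : lmodType R) (n : natinf) : Prop :=
  if n is Some k then pd_le M k else True.

(* pd M < n+1, n extended (with ∞+1 = ∞, i.e. pd M finite when n = ∞) *)
Definition pd_lt_succ (M : lmodType R) (n : natinf) : Prop :=
  if n is Some k then pd_le M k else exists k, pd_le M k.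

(* M ∈ P^{<n+1}: resolution by f.g. projectives of length j <= n
   (for n = ∞: any finite length, i.e. P^{<∞}) *)
Definition P_lt_succ (n : natinf) (M : lmodType R) : Prop :=
  exists j, (if n is Some k then (j <= k)%N else True) /\
            resolution fg_projective j M.

Definition P_lt_inf (M : lmodType R) : Prop :=
  exists j, resolution fg_projective j M.

Definition lfPD_le (n : natinf) : Prop :=
  forall M : lmodType R, P_lt_inf M -> pd_le_inf M n.

Definition n_exact (n : natinf) (A B C : lmodType R) (f : {linear A -> B})
  (g : {linear B -> C}) : Prop :=
  short_exact f g /\ forall M : lmodType R, P_lt_succ n M -> hom_exact M f g.

Definition n_projective (n : natinf) (P : lmodType R) : Prop :=
  forall (A B C : lmodType R) (f : {linear A -> B}) (g : {linear B -> C}),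
    n_exact n f g -> hom_exact P f g.

Definition pure_exact (A B C : lmodType R) (f : {linear A -> B})
  (g : {linear B -> C}) : Prop :=
  short_exact f g /\ forall F : lmodType R, fin_pres F -> hom_exact F f g.

Definition pure_projective (P : lmodType R) : Prop :=
  forall (A B C : lmodType R) (f : {linear A -> B}) (g : {linear B -> C}),
    pure_exact f g -> hom_exact P f g.

(* left coherent: every finitely generated left ideal is finitely presented;
   left ideals = modules embedding into the regular module R^o *)
Definition left_coherent : Prop :=
  forall (I : lmodType R) (iota : {linear I -> R^o}),
    injective iota -> fin_gen I -> fin_pres I.

End Modules.

(* If l.fPD(R) <= n, a module of P^{<oo} has projective dimension at
   most n, and cutting its resolution by finitely generated projectives at
   length n stays within finitely generated projectives; so P^{<oo} = P^{<n+1},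
   and the m-exact sequences, m > n, are exactly the n-exact ones.
   Conversely, a finitely generated module that is projective with respect to
   the sequences on which Hom(X, -) is exact for every X in a class closed under
   finite sums and isomorphisms is a retract of a member of that class: it
   splits off the direct sum of all maps from members of the class into it, and
   the splitting lands in finitely many summands.  If (n+1)-projective modules
   are n-projective, an induction on the length of a finite resolution then
   makes every module of P^{<oo} a retract of a module of P^{<n+1}, so its
   projective dimension is at most n.  Finitely presented modules are pure projective, so under (b) each
   of them is a retract of a module of P^{<n+1}; this bounds its projective
   dimension and, applied to R/I for a finitely generated left ideal I, shows
   that I is finitely presented.  Conversely, over a left coherent ring a
   finitely presented module has resolutions by finitely generated free modules
   of every length, so the bound on its projective dimension puts it into
   P^{<n+1}, and then every n-exact sequence is pure. *)

From HB Require Import structures.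
From mathcomp Require Import all_boot all_order all_algebra.
From mathcomp Require Import generic_quotient ring_quotient boolp.
Set Implicit Arguments. Unset Strict Implicit. Unset Printing Implicit Defensive.
Import GRing.Theory.
Local Open Scope ring_scope.
Local Open Scope quotient_scope.

Lemma sum_cast_ord (V : nmodType) m n (e : m = n) (F : 'I_n -> V) :
  \sum_(i < m) F (cast_ord e i) = \sum_(i < n) F i.
Proof. by case: n / e F => F; apply: eq_bigr => i _; rewrite cast_ord_id. Qed.

Lemma nth_map_enum_ord (T : Type) (x0 : T) n (F : 'I_n -> T) (i : 'I_n) :
  nth x0 [seq F j | j <- enum 'I_n] i = F i.
Proof. by rewrite (nth_map i) ?size_enum_ord // nth_ord_enum. Qed.

(** * Submodules, quotients and linear maps *)

Section LinearMaps.
Variable R : pzRingType.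
Implicit Types A B C F J K L M N P Q U V W X : lmodType R.

Section Pairing.
Variables (U V W : lmodType R) (f : {linear U -> V}) (g : {linear U -> W}).

Definition lin_pair (u : U) : V * W := (f u, g u).

Lemma lin_pair_is_linear : linear lin_pair.
Proof. by move=> a x y; rewrite /lin_pair !linearP. Qed.
HB.instance Definition _ := GRing.isSemilinear.Build R U (V * W)%type _ lin_pair
  (GRing.semilinear_linear lin_pair_is_linear).

End Pairing.

Section RowCombination.
Variables (M : lmodType R) (n : nat) (s : 'I_n -> M).

Definition row_comb (r : 'rV[R]_n) : M := \sum_(j < n) r 0 j *: s j.

Lemma row_comb_is_linear : linear row_comb.
Proof.
move=> a x y; rewrite /row_comb scaler_sumr -big_split /=; apply: eq_bigr => j _.
by rewrite !mxE scalerDl scalerA.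
Qed.
HB.instance Definition _ := GRing.isSemilinear.Build R 'rV[R]_n M _ row_comb
  (GRing.semilinear_linear row_comb_is_linear).

End RowCombination.

Lemma linear_row_sum M n (f : {linear 'rV[R]_n -> M}) r :
  f r = \sum_(j < n) r 0 j *: f 'e_j.
Proof.
by rewrite {1}(row_sum_delta r) linear_sum; apply: eq_bigr => j _; rewrite linearZ.
Qed.

Definition row_head b (v : 'rV[R]_b.+1) : R^o := v 0 0.

Lemma row_head_is_linear b : linear (@row_head b).
Proof. by move=> a x y; rewrite /row_head !mxE. Qed.
HB.instance Definition _ b := GRing.isSemilinear.Build R 'rV[R]_b.+1 R^o _ (@row_head b)
  (GRing.semilinear_linear (@row_head_is_linear b)).

Section Submodule.
Variables (V : lmodType R) (S : submodClosed V).

Record subm : predArgType := Subm { subm_val : V; _ : subm_val \in S }.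
HB.instance Definition _ := [isSub for subm_val].
HB.instance Definition _ := [Choice of subm by <:].
HB.instance Definition _ := [SubChoice_isSubLmodule of subm by <:].

Variables (U : lmodType R) (f : {linear U -> V}) (fS : forall x, f x \in S).

Definition corestr (x : U) : subm := Sub (f x) (fS x).

Lemma corestr_is_linear : linear corestr.
Proof. by move=> a x y; apply: val_inj; rewrite /= linearP. Qed.
HB.instance Definition _ := GRing.isSemilinear.Build R U subm _ corestr
  (GRing.semilinear_linear corestr_is_linear).

End Submodule.

Section KernelImage.
Variables (U V : lmodType R) (g : {linear U -> V}).

Definition kerS : {pred U} := [pred x | g x == 0].

Lemma kerS_submod_closed : submod_closed kerS.
Proof.
split=> [|a x y]; rewrite !inE ?linear0 // => /eqP gx /eqP gy.
by rewrite linearP gx gy scaler0 addr0.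
Qed.
HB.instance Definition _ := GRing.isSubmodClosed.Build R U kerS kerS_submod_closed.

Definition ker := subm kerS.

Lemma kerP x : reflect (g x = 0) (x \in kerS).
Proof. exact: eqP. Qed.

Lemma ker_val (x : ker) : g (val x) = 0.
Proof. exact/kerP/valP. Qed.

Definition imS : {pred V} := [pred y | `[< exists x, g x = y >]].

Lemma imS_submod_closed : submod_closed imS.
Proof.
split=> [|a _ _ /asboolP[x <-] /asboolP[y <-]]; apply/asboolP.
  by exists 0; rewrite linear0.
by exists (a *: x + y); rewrite linearP.
Qed.
HB.instance Definition _ := GRing.isSubmodClosed.Build R V imS imS_submod_closed.

Lemma imP y : reflect (exists x, g x = y) (y \in imS).
Proof. exact: asboolP. Qed.

End KernelImage.

End LinearMaps.

Section Quotient.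
Variables (R : pzRingType) (V : lmodType R) (S : submodClosed V).

Lemma submod_oppr_closed : oppr_closed S.
Proof. by move=> x Sx; rewrite -scaleN1r rpredZ. Qed.

(* The library quotient [Quotient.quot] expects a [zmodClosed] predicate, a
   structure that [submodClosed] does not extend. *)
Definition zmodc : zmodClosed V :=
  HB.pack_for (zmodClosed V) (S : {pred V}) S
    (Algebra.isOppClosed.Build V S submod_oppr_closed).

Local Notation Q := (Quotient.quot zmodc).

Definition qscale (a : R) := lift_op1 Q ( *:%R a).

Lemma pi_scale a : {morph \pi : x / a *: x >-> qscale a x}.
Proof.
move=> x; unlock qscale; apply/eqP; rewrite piE Quotient.equivE -scalerBr.
have Sx : x - repr (\pi_Q x) \in zmodc by rewrite Quotient.idealrBE reprK.
exact: (rpredZ a Sx : _ \in S).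
Qed.
Canonical pi_scale_morph a := PiMorph1 (pi_scale a).

Lemma qscaleA a b (x : Q) : qscale a (qscale b x) = qscale (a * b) x.
Proof. by rewrite -[x]reprK !piE scalerA. Qed.
Lemma qscale1 : left_id 1 qscale.
Proof. by move=> x; rewrite -[x]reprK !piE scale1r. Qed.
Lemma qscaleDr : right_distributive qscale +%R.
Proof. by move=> a x y; rewrite -[x]reprK -[y]reprK !piE scalerDr. Qed.
Lemma qscaleDl v : {morph qscale^~ v : a b / a + b}.
Proof. by move=> a b; rewrite -[v]reprK !piE scalerDl. Qed.
HB.instance Definition _ :=
  GRing.Zmodule_isLmodule.Build R Q qscaleA qscale1 qscaleDr qscaleDl.

Lemma pi_is_linear : linear (\pi_Q : V -> Q).
Proof. by move=> a x y; rewrite !piE. Qed.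
HB.instance Definition _ := GRing.isSemilinear.Build R V Q _ \pi_Q
  (GRing.semilinear_linear pi_is_linear).

Lemma pi_eq0 x : (\pi_Q x == 0) = (x \in S).
Proof. by have := Quotient.idealrBE zmodc x 0; rewrite subr0 linear0 => ->. Qed.

Lemma pi_surj : surjective (\pi_Q : V -> Q).
Proof. by move=> y; exists (repr y); rewrite reprK. Qed.

End Quotient.

Notation quotm S := (Quotient.quot (zmodc S)).

Section Modules.
Variable R : pzRingType.
Implicit Types A B C F J K L M N P Q U V W X : lmodType R.

Definition retract U V :=
  exists (i : {linear U -> V}) (p : {linear V -> U}), cancel i p.

Definition isomorphic U V :=
  exists (f : {linear U -> V}) (g : {linear V -> U}), cancel f g /\ cancel g f.

Lemma iso_retract U V : isomorphic U V -> retract U V.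
Proof. by case=> f [g [fK _]]; exists f, g. Qed.

Lemma iso_sym U V : isomorphic U V -> isomorphic V U.
Proof. by case=> f [g [fK gK]]; exists g, f. Qed.

Lemma bij_isomorphic U V (f : {linear U -> V}) :
  injective f -> surjective f -> isomorphic U V.
Proof.
move=> f_inj f_surj; have /all_sig[g gK] : forall y, {x | f x = y}.
  by move=> y; apply: cid; exact: f_surj.
have g_lin : linear g by move=> a x y; apply: f_inj; rewrite linearP !gK.
pose gL : {linear V -> U} := HB.pack g (GRing.isLinear.Build R V U *:%R g g_lin).
by exists f, gL; split=> [x|y]; [apply: f_inj; rewrite /= gK|exact: gK].
Qed.

Lemma short_exact_iso_ker K P M (f : {linear K -> P}) (g : {linear P -> M}) :
  short_exact f g -> isomorphic K (ker g).
Proof.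
move=> [f_inj [[gf_eq0 im_f] _]].
have fker x : f x \in kerS g by apply/kerP.
apply: (@bij_isomorphic _ _ (corestr fker)) => [x y /(congr1 val)/f_inj //|y].
by have [x fx] := im_f _ (ker_val y); exists x; apply: val_inj.
Qed.

Lemma ker_short_exact P M (g : {linear P -> M}) :
  surjective g -> short_exact (val : ker g -> P) g.
Proof.
move=> g_surj; split; first exact: val_inj.
split=> //; split=> [x|y /kerP gy]; first exact: ker_val.
by exists (Sub y gy).
Qed.

Lemma pi_ker_eq0 U M (p : {linear U -> M}) x :
  (\pi_(quotm (kerS p)) x == 0) = (p x == 0).
Proof. exact: pi_eq0. Qed.

Lemma quot_ker_iso U M (p : {linear U -> M}) :
  surjective p -> isomorphic (quotm (kerS p)) M.
Proof.
move=> p_surj; pose Q := quotm (kerS p).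
have p_repr x : p (repr (\pi_Q x)) = p x.
  by apply/eqP; rewrite -subr_eq0 -linearB -pi_ker_eq0 linearB /= reprK subrr.
have lift_lin : linear (fun q : Q => p (repr q)).
  by move=> a x y; rewrite -[x]reprK -[y]reprK !piE !p_repr linearP.
pose lift : {linear Q -> M} :=
  HB.pack (fun q : Q => p (repr q)) (GRing.isLinear.Build R Q M *:%R _ lift_lin).
apply: (@bij_isomorphic _ _ lift) => [x y /= /eqP|y].
  rewrite -subr_eq0 -linearB -pi_ker_eq0 linearB /= !reprK subr_eq0.
  by move/eqP.
by have [x <-] := p_surj y; exists (\pi_Q x); exact: p_repr.
Qed.

Lemma projective_retract F X : retract F X -> projective X -> projective F.
Proof.
move=> [i [p ip]] pX B C g g_surj h.
have [k hk] := pX B C g g_surj (h \o p).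
by exists (k \o i) => x /=; rewrite hk /= ip.
Qed.

Lemma projective_prod P Q : projective P -> projective Q -> projective (P * Q)%type.
Proof.
move=> pP pQ B C g g_surj h.
have [k1 hk1] := pP B C g g_surj (h \o lin_pair idfun \0).
have [k2 hk2] := pQ B C g g_surj (h \o lin_pair \0 idfun).
exists ((k1 \o fst) \+ (k2 \o snd)) => -[x y] /=.
rewrite linearD hk1 hk2 /= -linearD; congr (h _).
by apply: injective_projections; rewrite /= ?addr0 ?add0r.
Qed.

Lemma projective_free n : projective 'rV[R]_n.
Proof.
move=> B C g g_surj h.
have /all_sig[s gs] : forall j, {x | g x = h 'e_j}.
  by move=> j; apply: cid; exact: g_surj.
exists (row_comb s) => r; rewrite /= /row_comb linear_sum (linear_row_sum h).
by apply: eq_bigr => j _; rewrite linearZ gs.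
Qed.

Definition fgen M := exists n (f : {linear 'rV[R]_n -> M}), surjective f.

Lemma fgen_image M N (h : {linear M -> N}) : surjective h -> fgen M -> fgen N.
Proof.
move=> h_surj [n [f f_surj]]; exists n, (h \o f) => y.
by have [x <-] := h_surj y; have [r <-] := f_surj x; exists r.
Qed.

Lemma fgen_retract F X : retract F X -> fgen X -> fgen F.
Proof. by move=> [i [p ip]]; apply: (fgen_image (h := p)) => y; exists (i y). Qed.

Lemma fgen_free n : fgen 'rV[R]_n.
Proof. by exists n, idfun => r; exists r. Qed.

Lemma fgen_prod M N : fgen M -> fgen N -> fgen (M * N)%type.
Proof.
move=> [m [f f_surj]] [n [g g_surj]].
exists (m + n)%N, (lin_pair (f \o lsubmx) (g \o rsubmx)) => -[x y].
have [a <-] := f_surj x; have [b <-] := g_surj y.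
exists (row_mx a b).
by apply: injective_projections; rewrite /= ?row_mxKl ?row_mxKr.
Qed.

Lemma fgen_extension A L B (tau : {linear A -> L}) (sigma : {linear L -> B}) :
  surjective sigma -> (forall l, sigma l = 0 -> exists a, tau a = l) ->
  fgen A -> fgen B -> fgen L.
Proof.
move=> sigma_surj ker_sigma [m [al al_surj]] [n [be be_surj]].
have [be' sigma_be'] := projective_free sigma_surj be.
apply: (fgen_image (h := (tau \o al \o fst) \+ (be' \o snd))); last first.
  exact: fgen_prod (fgen_free _) (fgen_free _).
move=> l; have [v be_v] := be_surj (sigma l).
have /ker_sigma[a ta] : sigma (l - be' v) = 0 by rewrite linearB sigma_be' be_v subrr.
by have [u al_u] := al_surj a; exists (u, v); rewrite /= al_u ta subrK.
Qed.

Lemma fin_genP M : fin_gen M <-> fgen M.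
Proof.
split=> [[s hs]|[n [f f_surj]]].
  exists (size s), (row_comb (fun i : 'I_(size s) => s`_i)) => x.
  have [r ->] := hs x; exists (\row_i r i).
  by apply: eq_bigr => i _; rewrite mxE.
pose s := [seq f 'e_j | j <- enum 'I_n].
have sz : size s = n by rewrite size_map size_enum_ord.
exists s => x; have [r <-] := f_surj x; exists (fun i => r 0 (cast_ord sz i)).
rewrite linear_row_sum -(sum_cast_ord sz); apply: eq_bigr => i _.
by rewrite -[in RHS](_ : (cast_ord sz i : nat) = i) // nth_map_enum_ord.
Qed.

Definition fgproj M := projective M /\ fgen M.

Lemma fg_projectiveP M : fg_projective M <-> fgproj M.
Proof. by split=> -[pM fM]; split=> //; apply/fin_genP. Qed.

Lemma fgproj_retract F X : retract F X -> fgproj X -> fgproj F.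
Proof.
by move=> FX [pX fX]; split; [exact: projective_retract FX pX|exact: fgen_retract FX fX].
Qed.

Lemma fgproj_prod P Q : fgproj P -> fgproj Q -> fgproj (P * Q)%type.
Proof. by move=> [pP fP] [pQ fQ]; split; [exact: projective_prod|exact: fgen_prod]. Qed.

Lemma fgproj_free n : fgproj 'rV[R]_n.
Proof. by split; [exact: projective_free|exact: fgen_free]. Qed.

Lemma regular_iso_row : isomorphic 'rV[R]_1 R^o.
Proof.
pose g (r : R^o) : 'rV[R]_1 := \row_(j < 1) (r : R).
have g_lin : linear g by move=> a x y; apply/rowP => j; rewrite !mxE.
exists (@row_head R 0).
exists (HB.pack_for {linear R^o -> 'rV[R]_1} g (GRing.isLinear.Build R _ _ *:%R g g_lin)).
split=> [v|r] /=; rewrite /g /row_head; last by rewrite mxE.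
by apply/rowP => j; rewrite ord1 mxE.
Qed.

Lemma fgproj_regular : fgproj R^o.
Proof. exact: fgproj_retract (iso_retract (iso_sym regular_iso_row)) (fgproj_free 1). Qed.

Lemma zero_short_exact M : short_exact (\0 : {linear 'rV[R]_0 -> M}) idfun.
Proof.
split=> [x y _|]; first by rewrite !thinmx0.
by split=> [|y]; [split=> // y /= ->; exists 0|exists y].
Qed.
Lemma short_exact_prod K P M K' P' M' (f : {linear K -> P}) (g : {linear P -> M})
    (f' : {linear K' -> P'}) (g' : {linear P' -> M'}) :
  short_exact f g -> short_exact f' g' ->
  short_exact (lin_pair (f \o fst) (f' \o snd)) (lin_pair (g \o fst) (g' \o snd)).
Proof.
move=> [f_inj [[gf imf] g_surj]] [f'_inj [[gf' imf'] g'_surj]].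
split=> [[x x'] [y y'] e|].
  by rewrite (f_inj x y (congr1 fst e)) (f'_inj x' y' (congr1 snd e)).
split; first split=> [[x x']|[y y'] e].
- by apply: injective_projections; rewrite /= ?gf ?gf'.
- have [x fx] := imf y (congr1 fst e); have [x' fx'] := imf' y' (congr1 snd e).
  by exists (x, x'); apply: injective_projections; rewrite /= ?fx ?fx'.
move=> [z z']; have [y gy] := g_surj z; have [y' gy'] := g'_surj z'.
by exists (y, y'); apply: injective_projections; rewrite /= ?gy ?gy'.
Qed.

Lemma hom_exact_ker M B C (g : {linear B -> C}) :
  (forall h : {linear M -> C}, exists k : {linear M -> B}, forall x, g (k x) = h x) ->
  hom_exact M (val : ker g -> B) g.
Proof.
move=> lift; split=> [h1 h2 e x|]; first exact: val_inj (e x).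
split=> [h gh|//]; have hker x : h x \in kerS g by apply/kerP.
by exists (corestr hker).
Qed.

Lemma coker_short_exact A B (f : {linear A -> B}) :
  injective f -> short_exact f (\pi_(quotm (imS f)) : B -> _).
Proof.
move=> f_inj; split=> //; split; last exact: pi_surj.
split=> [x|y]; first by apply/eqP; rewrite pi_eq0; apply/imP; exists x.
by move/eqP; rewrite pi_eq0 => /imP.
Qed.

End Modules.

(** * Resolutions *)

Section Resolutions.
Variable R : pzRingType.
Implicit Types A B C F J K L M N P Q U V W X : lmodType R.

(* Both Schanuel's lemma ([i = p = id]) and the stability of resolutions under
   retracts ([P' = P], [psi = id]) are instances of this lemma. *)
Section KernelRetract.
Variables (P P' M M' : lmodType R) (g : {linear P -> M}) (g' : {linear P' -> M'}).
Variables (i : {linear M -> M'}) (p : {linear M' -> M}).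
Variables (phi : {linear P -> P'}) (psi : {linear P' -> P}).
Hypotheses (ip : cancel i p) (g'phi : forall x, g' (phi x) = i (g x))
  (gpsi : forall y, g (psi y) = p (g' y)).

Lemma ker_retract : retract (ker g) (ker g' * P)%type.
Proof.
have phi_ker (x : ker g) : (phi \o val) x \in kerS g'.
  by apply/kerP; rewrite /= g'phi ker_val linear0.
pose r : {linear (ker g' * P)%type -> P} :=
  (psi \o val \o fst) \+ snd \- (psi \o phi \o snd).
have r_ker z : r z \in kerS g.
  apply/kerP; rewrite /= !linearB linearD !gpsi ker_val g'phi ip.
  by rewrite linear0 add0r subrr.
exists (lin_pair (corestr phi_ker) val), (corestr r_ker) => x.
by apply: val_inj; rewrite /= addrC addKr.
Qed.

End KernelRetract.

Lemma schanuel_retract P P' M (g : {linear P -> M}) (g' : {linear P' -> M}) :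
  projective P -> projective P' -> surjective g -> surjective g' ->
  retract (ker g) (ker g' * P)%type.
Proof.
move=> pP pP' g_surj g'_surj.
have [phi g'phi] := pP _ _ g' g'_surj g.
have [psi gpsi] := pP' _ _ g g_surj g'.
exact: (@ker_retract _ _ _ _ g g' idfun idfun phi psi).
Qed.

Lemma retract_ker_comp F X Q (i : {linear F -> X}) (p : {linear X -> F})
    (g : {linear Q -> X}) :
  cancel i p -> projective Q -> surjective g -> retract (ker (p \o g)) (ker g * Q)%type.
Proof.
move=> ip pQ g_surj; have [phi gphi] := pQ _ _ g g_surj (i \o p \o g).
exact: (@ker_retract _ _ _ _ (p \o g) g i p phi idfun).
Qed.

(* [resol C B m M]: there is an exact sequence
   [0 -> K_m -> P_(m-1) -> ... -> P_0 -> M -> 0] with every [P_i] in [C] and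
   [K_m] in [B], presented as [m] successive short exact sequences. *)
Fixpoint resol (C B : lmodType R -> Prop) (m : nat) M : Prop :=
  if m is m'.+1 then
    exists P K (f : {linear K -> P}) (g : {linear P -> M}),
      C P /\ short_exact f g /\ resol C B m' K
  else B M.

Lemma resol_mono (C B C' B' : lmodType R -> Prop) :
  (forall M, C M -> C' M) -> (forall M, B M -> B' M) ->
  forall m M, resol C B m M -> resol C' B' m M.
Proof.
move=> CC' BB'; elim=> [|m IH] M /=; first exact: BB'.
move=> [P [K [f [g [CP [fg rK]]]]]]; exists P, K, f, g.
by split; [exact: CC'|split=> //; exact: IH].
Qed.

Section ResolutionClosure.
Variables C B : lmodType R -> Prop.
Hypotheses (B_retract : forall F X, retract F X -> B X -> B F)
  (B_prod : forall M N, B M -> B N -> B (M * N)%type)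
  (C_B : forall P, C P -> B P) (C_proj : forall P, C P -> projective P)
  (C_prod : forall P Q, C P -> C Q -> C (P * Q)%type) (C_zero : C 'rV[R]_0).

Lemma resol_of_C m P : C P -> resol C B m P.
Proof.
elim: m P => [|m IH] P CP /=; first exact: C_B.
exists P, 'rV[R]_0, \0, idfun; split=> //; split; [exact: zero_short_exact|exact: IH].
Qed.

Lemma resol_prod m M N : resol C B m M -> resol C B m N -> resol C B m (M * N)%type.
Proof.
elim: m M N => [|m IH] M N /=; first exact: B_prod.
move=> [P [K [f [g [CP [fg rK]]]]]] [P' [K' [f' [g' [CP' [fg' rK']]]]]].
exists (P * P')%type, (K * K')%type, (lin_pair (f \o fst) (f' \o snd)).
exists (lin_pair (g \o fst) (g' \o snd)).
by split; [exact: C_prod|split; [exact: short_exact_prod|exact: IH]].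
Qed.

Lemma resol_retract m F X : retract F X -> resol C B m X -> resol C B m F.
Proof.
elim: m F X => [|m IH] F X; first exact: B_retract.
move=> [i [p ip]] [Q [L [f [g [CQ [fg rL]]]]]].
have g_surj : surjective g by case: fg => _ [].
have pg_surj : surjective (p \o g).
  by move=> y; have [x gx] := g_surj (i y); exists x; rewrite /= gx ip.
have rkerg : resol C B m (ker g).
  by apply: IH rL; exact/iso_retract/iso_sym/(short_exact_iso_ker fg).
exists Q, (ker (p \o g)), val, (p \o g); split=> //; split; first exact: ker_short_exact.
apply: IH (retract_ker_comp ip (C_proj CQ) g_surj) _.
exact: resol_prod rkerg (resol_of_C m CQ).
Qed.

Lemma resol_iso m M N : isomorphic M N -> resol C B m M -> resol C B m N.
Proof. by move/iso_sym/iso_retract; exact: resol_retract. Qed.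

Lemma resol_syzygy m M P K (f : {linear K -> P}) (g : {linear P -> M}) :
  resol C B m.+1 M -> C P -> short_exact f g -> resol C B m K.
Proof.
move=> [P' [K' [f' [g' [CP' [fg' rK']]]]]] CP fg.
have g_surj : surjective g by case: fg => _ [].
have g'_surj : surjective g' by case: fg' => _ [].
apply: resol_iso (iso_sym (short_exact_iso_ker fg)) _.
apply: resol_retract (schanuel_retract (C_proj CP) (C_proj CP') g_surj g'_surj) _.
apply: resol_prod (resol_of_C m CP).
exact: resol_iso (short_exact_iso_ker fg') rK'.
Qed.

Lemma resol_succ m M : (forall M, B M -> C M) -> resol C B m M -> resol C B m.+1 M.
Proof.
move=> B_C; elim: m M => [|m IH] M; first by move/B_C; exact: resol_of_C.
by move=> [P [K [f [g [CP [fg rK]]]]]]; exists P, K, f, g; do 2 split=> //; exact: IH.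
Qed.

Lemma resol_pad m k M : (forall M, B M -> C M) -> (m <= k)%N ->
  resol C B m M -> resol C B k M.
Proof.
move=> B_C /subnK <-; elim: (k - m)%N => [//|d IH] rM.
by rewrite addSn; exact: resol_succ B_C (IH rM).
Qed.

End ResolutionClosure.

Section ResolutionChains.
Variable Q : lmodType R -> Prop.
Hypothesis Q_iso : forall M N, isomorphic M N -> Q M -> Q N.

Lemma resolution_resol j M : resolution Q j M -> resol Q Q j M.
Proof.
elim: j M => [|j IH] M [P [d [e [QP [e_surj H]]]]].
  exact: Q_iso (bij_isomorphic H e_surj) (QP 0%N isT).
case: H => [[de0 im_d0] [exact_d d_inj]].
exists (P 0%N), (ker e), val, e; split; first exact: QP.
split; first exact: ker_short_exact.
have d0_ker x : d 0%N x \in kerS e by apply/kerP; exact: de0.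
apply: IH; exists (fun i => P i.+1), (fun i => d i.+1), (corestr d0_ker).
split=> [i ij|]; first exact: QP.
split=> [y|].
  by have [x dx] := im_d0 _ (ker_val y); exists x; apply: val_inj.
case: j QP exact_d d_inj => [|j] QP exact_d d_inj.
  by move=> x y /(congr1 val); exact: d_inj.
have [d10 im_d1] := exact_d 0%N isT.
split; first by split=> [x|y /(congr1 val)]; [apply: val_inj; exact: d10|exact: im_d1].
by split=> // i ij; exact: exact_d.
Qed.

Lemma resol_resolution j M : resol Q Q j M -> resolution Q j M.
Proof.
elim: j M => [|j IH] M.
  move=> QM; exists (fun _ => M), (fun _ => idfun), idfun.
  by do 2 split=> //; move=> y; exists y.
move=> [P0 [K [f [g [QP0 [[f_inj [[gf im_f] g_surj]] rK]]]]]].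
have [P [d [e [QP [e_surj H]]]]] := IH _ rK.
pose P' i := if i is i'.+1 then P i' else P0.
pose d' i := match i return {linear P' i.+1 -> P' i} with
             | 0%N => f \o e | i'.+1 => d i' end.
exists P', d', g; split=> [[|i] //= ij|]; first exact: QP.
split=> //; split.
  split=> [x|y /im_f[k <-]]; first by rewrite /= gf.
  by have [x <-] := e_surj k; exists x.
case: j IH rK QP H => [|j] _ _ QP H.
  by split=> [//|x y /f_inj /H].
case: H => [[e0 im_e] [exact_d d_inj]]; split=> //.
case=> [|i] ij /=; last exact: exact_d.
split=> [x|y] /=; first by rewrite e0 linear0.
by rewrite -(linear0 f) => /f_inj /im_e.
Qed.

Lemma resolutionP j M : resolution Q j M <-> resol Q Q j M.
Proof. by split; [exact: resolution_resol|exact: resol_resolution]. Qed.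

End ResolutionChains.

End Resolutions.

Notation pd_res m M := (resol (@projective _) (@projective _) m M).
Notation fgproj_res m M := (resol (@fgproj _) (@fgproj _) m M).
Notation FP m M := (resol (@fgproj _) (@fgen _) m M).

Section ResolutionClasses.
Variable R : pzRingType.
Implicit Types A B C F J K L M N P Q U V W X : lmodType R.

Local Ltac closure := solve [exact: projective_retract | exact: fgproj_retract
  | exact: fgen_retract | exact: projective_prod | exact: fgproj_prod
  | exact: fgen_prod | exact: projective_free | exact: fgproj_free
  | by [] | by move=> ? []].

Lemma pd_res_retract m F X : retract F X -> pd_res m X -> pd_res m F.
Proof. by apply: resol_retract; closure. Qed.

Lemma pd_res_syzygy m M P K (f : {linear K -> P}) (g : {linear P -> M}) :
  pd_res m.+1 M -> projective P -> short_exact f g -> pd_res m K.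
Proof. by move=> pdM pP fg; apply: resol_syzygy pdM pP fg; closure. Qed.

Lemma pd_res_pad m k M : (m <= k)%N -> pd_res m M -> pd_res k M.
Proof. by apply: resol_pad; closure. Qed.

Lemma fgproj_res_prod m M N :
  fgproj_res m M -> fgproj_res m N -> fgproj_res m (M * N)%type.
Proof. by apply: resol_prod; closure. Qed.

Lemma fgproj_res_iso m M N : isomorphic M N -> fgproj_res m M -> fgproj_res m N.
Proof. by apply: resol_iso; closure. Qed.

Lemma fgproj_res_pad m k M : (m <= k)%N -> fgproj_res m M -> fgproj_res k M.
Proof. by apply: resol_pad; closure. Qed.

Lemma FP_retract m F X : retract F X -> FP m X -> FP m F.
Proof. by apply: resol_retract; closure. Qed.

Lemma FP_iso m M N : isomorphic M N -> FP m M -> FP m N.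
Proof. by move/iso_sym/iso_retract; exact: FP_retract. Qed.

Lemma FP_syzygy m M P K (f : {linear K -> P}) (g : {linear P -> M}) :
  FP m.+1 M -> fgproj P -> short_exact f g -> FP m K.
Proof. by move=> FPM PP fg; apply: resol_syzygy FPM PP fg; closure. Qed.

Lemma FP_fgen m M : FP m M -> fgen M.
Proof.
case: m => [//|m] [P [K [f [g [[_ fP] [[_ [_ g_surj]] _]]]]]].
exact: fgen_image g_surj fP.
Qed.

Lemma fgproj_res_FP j m M : fgproj_res j M -> FP m M.
Proof.
elim: j m M => [|j IH] m M.
  by move=> PM; apply: resol_of_C; closure.
move=> [P [K [f [g [PP [fg rK]]]]]]; case: m => [|m].
  by case: PP fg => _ fP [_ [_ g_surj]]; exact: fgen_image g_surj fP.
by exists P, K, f, g; do 2 split=> //; exact: IH.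
Qed.

Lemma fgproj_res_pd j M : fgproj_res j M -> pd_res j M.
Proof. by apply: resol_mono => P []. Qed.

Lemma FP_pd_fgproj_res k M : FP k M -> pd_res k M -> fgproj_res k M.
Proof.
elim: k M => [|k IH] M; first by split.
move=> [P [K [f [g [PP [fg rK]]]]]] pdM.
exists P, K, f, g; do 2 split=> //; apply: IH rK _.
by apply: pd_res_syzygy pdM _ fg; case: PP.
Qed.

Lemma projective_iso M N : isomorphic M N -> projective M -> projective N.
Proof. by move/iso_sym/iso_retract; exact: projective_retract. Qed.

Lemma fg_projective_iso M N : isomorphic M N -> fg_projective M -> fg_projective N.
Proof.
move/iso_sym/iso_retract => NM /fg_projectiveP PM.
by apply/fg_projectiveP; exact: fgproj_retract NM PM.
Qed.

Lemma pd_leP k M : pd_le M k <-> pd_res k M.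
Proof.
split=> [[j [jk /(resolutionP (@projective_iso)) pdM]]|pdM].
  exact: pd_res_pad jk pdM.
by exists k; split=> //; apply/(resolutionP (@projective_iso)).
Qed.

Lemma fg_resolutionP j M : resolution (@fg_projective R) j M <-> fgproj_res j M.
Proof.
rewrite resolutionP; last exact: fg_projective_iso.
by split; apply: resol_mono => P /fg_projectiveP.
Qed.

Lemma P_lt_succP n M : P_lt_succ n M <->
  exists j, (if n is Some k then (j <= k)%N else True) /\ fgproj_res j M.
Proof. by split=> -[j [jn /fg_resolutionP rM]]; exists j. Qed.

Lemma P_lt_infP M : P_lt_inf M <-> exists j, fgproj_res j M.
Proof. by split=> -[j /fg_resolutionP rM]; exists j. Qed.

End ResolutionClasses.

(** * Finitely presented modules and coherence *)

Section FinitePresentation.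
Variable R : pzRingType.
Implicit Types A B C F J K L M N P Q U V W X : lmodType R.

Definition mx_presented M :=
  exists b c (q : {linear 'rV[R]_b -> M}) (rho : {linear 'rV[R]_c -> 'rV[R]_b}),
    surjective q /\ (forall x, q x = 0 <-> exists y, rho y = x).

Lemma row_entry_sum n c (y : 'rV[R]_c) (F : 'I_c -> 'rV[R]_n) i :
  (\sum_(k < c) y 0 k *: F k) 0 i = \sum_(k < c) y 0 k * F k 0 i.
Proof. by rewrite summxE; apply: eq_bigr => k _; rewrite mxE. Qed.

Lemma mx_presented_fin_pres M : mx_presented M -> fin_pres M.
Proof.
move=> [b [c [q [rho [q_surj ker_q]]]]].
pose s := [seq q 'e_j | j <- enum 'I_b].
have ss : size s = b by rewrite size_map size_enum_ord.
have sE (i : 'I_(size s)) : s`_i = q 'e_(cast_ord ss i).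
  by rewrite -[in LHS](_ : (cast_ord ss i : nat) = i) // nth_map_enum_ord.
pose rels := [seq (fun i : 'I_(size s) => rho 'e_k 0 (cast_ord ss i)) | k <- enum 'I_c].
have sr : size rels = c by rewrite size_map size_enum_ord.
have rE (k : 'I_(size rels)) : nth (fun _ => 0) rels k =
    (fun i : 'I_(size s) => rho 'e_(cast_ord sr k) 0 (cast_ord ss i)).
  by rewrite -[in LHS](_ : (cast_ord sr k : nat) = k) // nth_map_enum_ord.
have sumE (r : 'I_(size s) -> R) :
    \sum_(i < size s) r i *: s`_i = q (\row_j r (cast_ord (esym ss) j)).
  rewrite (linear_row_sum q) -(sum_cast_ord ss); apply: eq_bigr => i _.
  by rewrite sE mxE cast_ordK.
exists s; split.
  move=> x; have [r <-] := q_surj x; exists (fun i => r 0 (cast_ord ss i)).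
  by rewrite sumE; congr (q _); apply/rowP => j; rewrite !mxE cast_ordKV.
exists rels; split.
  move=> k; rewrite rE sumE; apply/ker_q; exists 'e_(cast_ord sr k).
  by apply/rowP => j; rewrite !mxE cast_ordKV.
move=> r; rewrite sumE => /ker_q[y rho_y].
exists (fun k => y 0 (cast_ord sr k)) => i.
have := congr1 (fun v : 'rV[R]_b => v 0 (cast_ord ss i)) rho_y.
rewrite /= mxE cast_ordK => <-.
rewrite (linear_row_sum rho) row_entry_sum -(sum_cast_ord sr).
by apply: eq_bigr => k _; rewrite rE.
Qed.

Lemma fin_pres_mx_presented M : fin_pres M -> mx_presented M.
Proof.
move=> [s [s_gen [rels [rels0 rels_gen]]]].
pose rw (k : 'I_(size rels)) := \row_i nth (fun _ => 0) rels k i.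
exists (size s), (size rels), (row_comb (fun i : 'I_(size s) => s`_i)), (row_comb rw).
split=> [x|x].
  have [r ->] := s_gen x; exists (\row_i r i).
  by apply: eq_bigr => i _; rewrite mxE.
split=> [qx|[y <-]].
  have [cc hcc] := rels_gen (fun i => x 0 i) qx.
  exists (\row_k cc k); apply/rowP => i.
  by rewrite row_entry_sum hcc; apply: eq_bigr => k _; rewrite !mxE.
rewrite /= [row_comb rw y]/row_comb linear_sum big1 // => k _.
have rk : row_comb (fun i : 'I_(size s) => s`_i) (rw k) = 0.
  by rewrite -[RHS](rels0 k); apply: eq_bigr => j _; rewrite mxE.
by rewrite linearZ /= rk scaler0.
Qed.

Lemma mx_presented_FP1 M : mx_presented M -> FP 1 M.
Proof.
move=> [b [c [q [rho [q_surj ker_q]]]]].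
exists 'rV[R]_b, (ker q), val, q; split; first exact: fgproj_free.
split; first exact: ker_short_exact.
have rho_ker y : rho y \in kerS q by apply/kerP/ker_q; exists y.
exists c, (corestr rho_ker) => x.
by have [y rho_y] := proj1 (ker_q _) (ker_val x); exists y; apply: val_inj.
Qed.

Lemma FP1_mx_presented M : FP 1 M -> mx_presented M.
Proof.
move=> FPM; have [b [p p_surj]] := FP_fgen FPM.
have FPker := FP_syzygy FPM (fgproj_free R b) (ker_short_exact p_surj).
have [c [rho rho_surj]] := FPker.
exists b, c, p, (val \o rho); split=> // x; split=> [/kerP px|[y <-]]; last exact: ker_val.
by have [y rho_y] := rho_surj (Sub x px); exists y; rewrite /= rho_y.
Qed.

Lemma fin_presP M : fin_pres M <-> FP 1 M.
Proof.
split=> [/fin_pres_mx_presented/mx_presented_FP1 //|].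
by move/FP1_mx_presented/mx_presented_fin_pres.
Qed.

Lemma FP1_of_fgen_ker M n (g : {linear 'rV[R]_n -> M}) :
  surjective g -> fgen (ker g) -> FP 1 M.
Proof.
move=> g_surj fker; exists 'rV[R]_n, (ker g), val, g.
by split; [exact: fgproj_free|split; [exact: ker_short_exact|]].
Qed.

Lemma fgen_ker_FP1 (K' : lmodType R) K J (f : {linear K' -> K}) (th : {linear K -> J}) :
  short_exact f th -> fgen K -> FP 1 J -> fgen K'.
Proof.
move=> fth [c [rho rho_surj]] FPJ; have th_surj : surjective th by case: fth => _ [].
have q_surj : surjective (th \o rho).
  by move=> y; have [x <-] := th_surj y; have [r <-] := rho_surj x; exists r.
have FPker := FP_syzygy FPJ (fgproj_free R c) (ker_short_exact q_surj).
have rho_ker (l : ker (th \o rho)) : (rho \o val) l \in kerS th.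
  by apply/kerP; exact: (ker_val l).
apply: fgen_retract (iso_retract (short_exact_iso_ker fth)) _.
apply: fgen_image (corestr rho_ker) _ FPker => k.
have [x rho_x] := rho_surj (val k).
have qx : (th \o rho) x = 0 by rewrite /= rho_x ker_val.
by exists (Sub x (introT (kerP _ _) qx)); apply: val_inj; rewrite /= rho_x.
Qed.

Lemma ker_comp_short_exact P K J (g : {linear P -> K}) (th : {linear K -> J}) :
  surjective g ->
  exists (i : {linear ker g -> ker (th \o g)}) (h : {linear ker (th \o g) -> ker th}),
    short_exact i h.
Proof.
move=> g_surj.
have i_ker (x : ker g) : val x \in kerS (th \o g) by apply/kerP; rewrite /= ker_val linear0.
have h_ker (x : ker (th \o g)) : (g \o val) x \in kerS th by apply/kerP; exact: (ker_val x).
exists (corestr i_ker), (corestr h_ker).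
split=> [x y /(congr1 val) /= /val_inj //|]; split; first split.
- by move=> x; apply: val_inj; rewrite /= ker_val.
- move=> y /(congr1 val) /= gy; have /kerP gy' := gy.
  by exists (Sub (val y) gy'); apply: val_inj.
move=> z; have [x gx] := g_surj (val z).
have thgx : (th \o g) x = 0 by rewrite /= gx ker_val.
by exists (Sub x (introT (kerP _ _) thgx)); apply: val_inj; rewrite /= gx.
Qed.

Lemma FP1_extension (K' : lmodType R) K J (f : {linear K' -> K}) (th : {linear K -> J}) :
  short_exact f th -> FP 1 K' -> FP 1 J -> FP 1 K.
Proof.
move=> fth FPK' FPJ; have [f_inj [[thf im_f] th_surj]] := fth.
have [n [g g_surj]] := fgen_extension th_surj im_f (FP_fgen FPK') (FP_fgen FPJ).
have thg_surj : surjective (th \o g).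
  by move=> y; have [x <-] := th_surj y; have [r <-] := g_surj x; exists r.
have fker := fgen_ker_FP1 (ker_short_exact thg_surj) (fgen_free R n) FPJ.
have [i [h ih]] := ker_comp_short_exact th g_surj.
have FPker := FP_iso (short_exact_iso_ker fth) FPK'.
exact: FP1_of_fgen_ker g_surj (fgen_ker_FP1 ih fker FPker).
Qed.

End FinitePresentation.

Section Coherence.
Variable R : pzRingType.
Implicit Types A B C F J K L M N P Q U V W X : lmodType R.
Hypothesis coh : left_coherent R.

Lemma row_head_col'_eq0 b (v : 'rV[R]_b.+1) : row_head v = 0 -> col' 0 v = 0 -> v = 0.
Proof.
move=> v0 v'0; apply/rowP => j; rewrite mxE.
case: (unliftP 0 j) => [j' ->|-> //].
by have := congr1 (fun w : 'rV[R]_b => w 0 j') v'0; rewrite !mxE.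
Qed.

(* Induction on [b]: the first coordinate maps [K] onto a finitely generated
   left ideal, finitely presented by coherence, with kernel a finitely
   generated submodule of [R^b]. *)
Lemma coherent_fgen_row_FP1 b K (io : {linear K -> 'rV[R]_b}) :
  injective io -> fgen K -> FP 1 K.
Proof.
elim: b K io => [|b IH] K io io_inj fK.
  have K0 : isomorphic 'rV[R]_0 K.
    apply: (@bij_isomorphic _ _ _ \0) => [x y _|y]; first by rewrite !thinmx0.
    by exists 0; apply: io_inj; rewrite !thinmx0.
  exact: (@fgproj_res_FP _ 0) (fgproj_retract (iso_retract (iso_sym K0)) (fgproj_free R 0)).
pose phi := @row_head R b \o io.
have phi_im x : phi x \in imS phi by apply/imP; exists x.
pose th := corestr phi_im.
have th_surj : surjective th.
  by move=> y; have /imP[x phix] := valP y; exists x; apply: val_inj.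
have FPJ : FP 1 (subm (imS phi)).
  apply/fin_presP/(coh (iota := val)); first exact: val_inj.
  by apply/fin_genP; exact: fgen_image th_surj fK.
have io'_inj : injective (col' 0 \o io \o (val : ker th -> K)).
  apply: raddf_inj => x /= x0; apply: val_inj; apply: io_inj; rewrite linear0.
  apply: row_head_col'_eq0 => //; exact: (congr1 val (ker_val x)).
have fker := fgen_ker_FP1 (ker_short_exact th_surj) fK FPJ.
exact: FP1_extension (ker_short_exact th_surj) (IH _ _ io'_inj fker) FPJ.
Qed.

Lemma coherent_FP m M : FP 1 M -> FP m M.
Proof.
elim: m M => [|m IH] M FPM; first exact: FP_fgen FPM.
have [P [K [f [g [[pP [b [pi pi_surj]]] [fg fK]]]]]] := FPM.
have [sg pi_sg] := pP _ _ pi pi_surj idfun.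
exists P, K, f, g; split; first by split=> //; exists b, pi.
split=> //; apply: IH; apply: (@coherent_fgen_row_FP1 b _ (sg \o f)) => // x y /= e.
by case: fg => f_inj _; apply: f_inj; have := congr1 pi e; rewrite !pi_sg.
Qed.

End Coherence.

(** * Relatively projective modules *)

Lemma eq_sum_support (I : eqType) (N : nmodType) (F : I -> N) (s t : seq I) :
  uniq s -> uniq t ->
  (forall i, i \notin s -> F i = 0) -> (forall i, i \notin t -> F i = 0) ->
  \sum_(i <- s) F i = \sum_(i <- t) F i.
Proof.
move=> us ut Fs Ft.
rewrite [LHS](bigID (mem t)) [RHS](bigID (mem s)) /=.
rewrite [X in _ + X]big1 => [|i /Ft //].
rewrite [X in _ = _ + X]big1 => [|i /Fs //]; rewrite !addr0.
rewrite -[LHS]big_filter -[RHS]big_filter; apply: perm_big.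
by apply: uniq_perm; rewrite ?filter_uniq // => i; rewrite !mem_filter andbC.
Qed.

Section DirectSum.
Variables (R : pzRingType) (I : eqType) (X : I -> lmodType R).

Definition dprod := forall i, X i.
HB.instance Definition _ := Choice.on dprod.

Definition dprod_add (f g : dprod) : dprod := fun i => f i + g i.
Definition dprod_opp (f : dprod) : dprod := fun i => - f i.
Definition dprod_scale a (f : dprod) : dprod := fun i => a *: f i.

Lemma dprodP (f g : dprod) : (forall i, f i = g i) -> f = g.
Proof. exact: functional_extensionality_dep. Qed.

Lemma dprod_addA : associative dprod_add.
Proof. by move=> f g h; apply: dprodP => i; exact: addrA. Qed.
Lemma dprod_addC : commutative dprod_add.
Proof. by move=> f g; apply: dprodP => i; exact: addrC. Qed.
Lemma dprod_add0 : left_id (fun i => 0) dprod_add.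
Proof. by move=> f; apply: dprodP => i; exact: add0r. Qed.
Lemma dprod_addN : left_inverse (fun i => 0) dprod_opp dprod_add.
Proof. by move=> f; apply: dprodP => i; exact: addNr. Qed.
HB.instance Definition _ :=
  GRing.isZmodule.Build dprod dprod_addA dprod_addC dprod_add0 dprod_addN.

Lemma dprod_scaleA a b (f : dprod) :
  dprod_scale a (dprod_scale b f) = dprod_scale (a * b) f.
Proof. by apply: dprodP => i; exact: scalerA. Qed.
Lemma dprod_scale1 : left_id 1 dprod_scale.
Proof. by move=> f; apply: dprodP => i; exact: scale1r. Qed.
Lemma dprod_scaleDr : right_distributive dprod_scale +%R.
Proof. by move=> a f g; apply: dprodP => i; exact: scalerDr. Qed.
Lemma dprod_scaleDl f : {morph dprod_scale^~ f : a b / a + b}.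
Proof. by move=> a b; apply: dprodP => i; exact: scalerDl. Qed.
HB.instance Definition _ := GRing.Zmodule_isLmodule.Build R dprod
  dprod_scaleA dprod_scale1 dprod_scaleDr dprod_scaleDl.

Lemma dprodE a (f g : dprod) i : (a *: f + g) i = a *: f i + g i.
Proof. by []. Qed.

Definition supported (s : seq I) (f : dprod) := forall i, i \notin s -> f i = 0.

Definition fsuppS : {pred dprod} := [pred f | `[< exists s, supported s f >]].

Lemma fsuppS_submod_closed : submod_closed fsuppS.
Proof.
split=> [|a f g /asboolP[s sf] /asboolP[t tg]]; apply/asboolP; first by exists [::].
exists (s ++ t) => i; rewrite mem_cat negb_or => /andP[si ti].
by rewrite dprodE sf // tg // scaler0 addr0.
Qed.
HB.instance Definition _ := GRing.isSubmodClosed.Build R dprod fsuppS fsuppS_submod_closed.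

Definition dsum := subm fsuppS.

Definition supp (f : dsum) : seq I := undup (projT1 (cid (asboolW (valP f)))).

Lemma supp_uniq f : uniq (supp f). Proof. exact: undup_uniq. Qed.

Lemma supported_supp f : supported (supp f) (val f).
Proof. by move=> i; rewrite mem_undup; exact: (projT2 (cid (asboolW (valP f)))). Qed.

Definition dcoord i (f : dsum) : X i := val f i.

Lemma dcoord_is_linear i : linear (dcoord i).
Proof. by []. Qed.
HB.instance Definition _ i := GRing.isSemilinear.Build R dsum (X i) _ (dcoord i)
  (GRing.semilinear_linear (dcoord_is_linear i)).

Section Summation.
Variables (N : lmodType R) (h : forall i, {linear X i -> N}).

Definition dsum_map (f : dsum) : N := \sum_(i <- supp f) h i (val f i).

Lemma dsum_mapE f s : uniq s -> supported s (val f) ->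
  dsum_map f = \sum_(i <- s) h i (val f i).
Proof.
move=> us sf; apply: eq_sum_support (supp_uniq f) us _ _ => i si.
  by rewrite (supported_supp si) linear0.
by rewrite (sf i si) linear0.
Qed.

Lemma dsum_map_is_linear : linear dsum_map.
Proof.
move=> a f g; pose s := undup (supp f ++ supp g).
have us : uniq s := undup_uniq _.
have sf : supported s (val f).
  by move=> i; rewrite mem_undup mem_cat negb_or => /andP[/supported_supp].
have sg : supported s (val g).
  by move=> i; rewrite mem_undup mem_cat negb_or => /andP[_ /supported_supp].
have sfg : supported s (val (a *: f + g)).
  by move=> i si; rewrite /= dprodE sf // sg // scaler0 addr0.
rewrite (dsum_mapE us sf) (dsum_mapE us sg) (dsum_mapE us sfg) scaler_sumr -big_split.
by apply: eq_bigr => i _; rewrite /= dprodE linearP.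
Qed.
HB.instance Definition _ := GRing.isSemilinear.Build R dsum N _ dsum_map
  (GRing.semilinear_linear dsum_map_is_linear).

End Summation.

Section Injection.
Variable i : I.

Definition dinj_fun (x : X i) : dprod :=
  fun j => if i =P j is ReflectT e then ecast j (X j) e x else 0.

Lemma dinj_supported x : supported [:: i] (dinj_fun x).
Proof.
move=> j; rewrite inE => ji; rewrite /dinj_fun; case: eqP => // e.
by rewrite e eqxx in ji.
Qed.

Lemma dinj_fun_self x : dinj_fun x i = x.
Proof. by rewrite /dinj_fun; case: eqP => // e; rewrite (eq_irrelevance e erefl). Qed.

Lemma dinj_fsupp x : dinj_fun x \in fsuppS.
Proof. by apply/asboolP; exists [:: i]; exact: dinj_supported. Qed.

Definition dinj (x : X i) : dsum := Sub (dinj_fun x) (dinj_fsupp x).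

Lemma dinj_is_linear : linear dinj.
Proof.
move=> a x y; apply: val_inj; apply: dprodP => j.
rewrite /= dprodE /dinj_fun; case: eqP => [e|_]; last by rewrite scaler0 addr0.
by case: j / e.
Qed.
HB.instance Definition _ := GRing.isSemilinear.Build R (X i) dsum _ dinj
  (GRing.semilinear_linear dinj_is_linear).

Lemma dsum_map_dinj (N : lmodType R) (h : forall i, {linear X i -> N}) x :
  dsum_map h (dinj x) = h i x.
Proof.
rewrite (@dsum_mapE _ h _ [:: i]) ?big_seq1 //= ?dinj_fun_self //.
exact: dinj_supported.
Qed.

End Injection.

End DirectSum.

Section RelativeProjectivity.
Variables (R : pzRingType) (Cl : lmodType R -> Prop).
Implicit Types A B C F J K L M N P Q U V W X : lmodType R.

Definition rel_exact A B C (f : {linear A -> B}) (g : {linear B -> C}) :=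
  short_exact f g /\ forall M, Cl M -> hom_exact M f g.

Definition rel_projective N := forall A B C (f : {linear A -> B}) (g : {linear B -> C}),
  rel_exact f g -> hom_exact N f g.

Hypotheses (Cl_free : forall n, Cl 'rV[R]_n)
  (Cl_prod : forall M M', Cl M -> Cl M' -> Cl (M * M')%type)
  (Cl_iso : forall M M', isomorphic M M' -> Cl M -> Cl M')
  (Cl_fgen : forall M, Cl M -> fgen M).

Section TestSum.
Variables (N : lmodType R) (c : nat) (gen : {linear 'rV[R]_c -> N}).
Hypothesis gen_surj : surjective gen.

(* A map to [N] from a module of [Cl], whose source is presented as a quotient
   of a free module so that all such maps form a type. *)
Definition test_map := {b : nat & {S : submodClosed 'rV[R]_b &
  {h : {linear quotm S -> N} | Cl (quotm S)}}}.
HB.instance Definition _ := gen_eqMixin test_map.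

Definition tsrc (i : test_map) : lmodType R := quotm (projT1 (projT2 i)).
Definition tmap (i : test_map) : {linear tsrc i -> N} := proj1_sig (projT2 (projT2 i)).
Lemma Cl_tsrc i : Cl (tsrc i). Proof. exact: proj2_sig (projT2 (projT2 i)). Qed.

Definition test_sum : lmodType R := (dsum tsrc * 'rV[R]_c)%type.
Definition test_sum_map : {linear test_sum -> N} :=
  (dsum_map tmap \o fst) \+ (gen \o snd).

Lemma test_sum_map_surj : surjective test_sum_map.
Proof. by move=> y; have [r <-] := gen_surj y; exists (0, r); rewrite /= linear0 add0r. Qed.

Lemma rel_exact_test_sum : rel_exact (val : ker test_sum_map -> test_sum) test_sum_map.
Proof.
split=> [|M ClM]; first exact: ker_short_exact test_sum_map_surj.
apply: hom_exact_ker => h; have [b [p p_surj]] := Cl_fgen ClM.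
have QM := quot_ker_iso p_surj; have [psi [psi' [psiK psi'K]]] := QM.
have ClQ : Cl (quotm (kerS p)) by apply: Cl_iso ClM; exact: iso_sym QM.
pose i : test_map := existT _ b
  (existT _ (kerS p : submodClosed 'rV[R]_b) (exist _ (h \o psi : {linear _ -> N}) ClQ)).
exists (lin_pair (@dinj _ _ tsrc i \o psi') \0) => x.
by rewrite /= linear0 addr0 dsum_map_dinj /= psi'K.
Qed.

Fixpoint trunc (l : seq test_map) : lmodType R :=
  if l is i :: l' then (tsrc i * trunc l')%type else 'rV[R]_c.

Lemma Cl_trunc l : Cl (trunc l).
Proof. by elim: l => [|i l IH] /=; [exact: Cl_free|exact: Cl_prod (Cl_tsrc i) IH]. Qed.

Fixpoint trunc_proj (l : seq test_map) (z : test_sum) : trunc l :=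
  match l return trunc l with
  | [::] => z.2
  | i :: l' => (val z.1 i, @trunc_proj l' z)
  end.

Lemma trunc_proj_is_linear l : linear (trunc_proj l).
Proof. by elim: l => [|i l IH] a x y //=; apply: injective_projections; rewrite /= ?IH. Qed.
HB.instance Definition _ l := GRing.isSemilinear.Build R test_sum (trunc l) _
  (trunc_proj l) (GRing.semilinear_linear (trunc_proj_is_linear l)).

Fixpoint trunc_map (l : seq test_map) : trunc l -> N :=
  match l return trunc l -> N with
  | [::] => gen
  | i :: l' => fun x => tmap i x.1 + @trunc_map l' x.2
  end.

Lemma trunc_map_is_linear l : linear (@trunc_map l).
Proof.
elim: l => [|i l IH] a x y /=; first exact: linearP.
by rewrite linearP IH scalerDr addrACA.
Qed.
HB.instance Definition _ l := GRing.isSemilinear.Build R (trunc l) N _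
  (@trunc_map l) (GRing.semilinear_linear (@trunc_map_is_linear l)).

Lemma trunc_map_proj l z :
  trunc_map (trunc_proj l z) = \sum_(i <- l) tmap i (val z.1 i) + gen z.2.
Proof. by elim: l => [|i l IH] /=; rewrite ?big_nil ?add0r // big_cons IH addrA. Qed.

End TestSum.

Theorem rel_projective_retract N : fgen N -> rel_projective N ->
  exists X, Cl X /\ retract N X.
Proof.
move=> [c [gen gen_surj]] Nproj.
have [_ [_ lift]] := Nproj _ _ _ _ _ (rel_exact_test_sum gen_surj).
have [s sK] := lift idfun.
pose L := undup (flatten [seq supp (s (gen 'e_j)).1 | j <- enum 'I_c]).
have suppL y : supported L (val (s y).1).
  move=> i iL; have [r <-] := gen_surj y.
  rewrite -[val _ i]/((dcoord i \o fst \o s \o gen) r) linear_row_sum big1 // => j _.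
  rewrite /= /dcoord supported_supp ?scaler0 //; apply: contra iL => ij.
  by rewrite mem_undup; apply/flatten_mapP; exists j; rewrite ?mem_enum.
exists (trunc c L); split; first exact: Cl_trunc.
exists (trunc_proj L \o s), (@trunc_map _ _ gen L) => y.
by rewrite /= trunc_map_proj -(dsum_mapE _ (undup_uniq _) (suppL y)) -[RHS]sK.
Qed.

End RelativeProjectivity.

Lemma gt_inf_succ n : gt_inf (succinf n) n.
Proof. by case: n => //= k; exact: ltnSn. Qed.

Lemma gt_inf_None n : gt_inf None n.
Proof. by case: n. Qed.

Section MainArgument.
Variable R : pzRingType.
Implicit Types A B C F J K L M N P Q U V W X : lmodType R.

Lemma P_lt_succ_free n c : P_lt_succ n 'rV[R]_c.
Proof. by apply/P_lt_succP; exists 0%N; split; [case: n|exact: fgproj_free]. Qed.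

Lemma P_lt_succ_prod n M M' :
  P_lt_succ n M -> P_lt_succ n M' -> P_lt_succ n (M * M')%type.
Proof.
move=> /P_lt_succP[j [jn rM]] /P_lt_succP[j' [j'n rM']]; apply/P_lt_succP.
exists (maxn j j'); split; first by case: n jn j'n => // k jk j'k; rewrite geq_max jk j'k.
by apply: fgproj_res_prod; apply: fgproj_res_pad; [exact: leq_maxl| |exact: leq_maxr|].
Qed.

Lemma P_lt_succ_iso n M M' : isomorphic M M' -> P_lt_succ n M -> P_lt_succ n M'.
Proof.
move=> MM' /P_lt_succP[j [jn rM]]; apply/P_lt_succP.
by exists j; split=> //; exact: fgproj_res_iso MM' rM.
Qed.

Lemma P_lt_succ_fgen n M : P_lt_succ n M -> fgen M.
Proof. by move=> /P_lt_succP[j [_ rM]]; exact: FP_fgen (fgproj_res_FP 0 rM). Qed.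

Lemma P_lt_succ_mono m n M : gt_inf m n -> P_lt_succ (succinf n) M -> P_lt_succ m M.
Proof.
case: n m => [k|] [b|] //= kb /P_lt_succP[j [jk rM]]; apply/P_lt_succP.
  by exists j; split=> //; exact: leq_trans jk kb.
by exists j.
Qed.

Lemma n_projective_mono n1 n2 M : (forall X, P_lt_succ n1 X -> P_lt_succ n2 X) ->
  n_projective n1 M -> n_projective n2 M.
Proof.
by move=> sub Mproj A B C f g [fg hX]; apply: Mproj; split=> // X /sub; exact: hX.
Qed.

Lemma n_projective_gt_succ m n M :
  gt_inf m n -> n_projective (succinf n) M -> n_projective m M.
Proof. by move=> mn; apply: n_projective_mono => X; exact: P_lt_succ_mono. Qed.

Lemma P_lt_succ_n_projective n M : P_lt_succ n M -> n_projective n M.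
Proof. by move=> PM A B C f g [_ hX]; exact: hX. Qed.

Lemma n_projective_retract n N : fgen N -> n_projective n N ->
  exists X, P_lt_succ n X /\ retract N X.
Proof.
apply: rel_projective_retract.
- exact: P_lt_succ_free.
- exact: P_lt_succ_prod.
- exact: P_lt_succ_iso.
- exact: P_lt_succ_fgen.
Qed.

Lemma P_lt_succ_lfPD k X : lfPD_le R (Some k) -> P_lt_inf X -> P_lt_succ (Some k) X.
Proof.
move=> lfPD PX; have /pd_leP pdX := lfPD X PX.
have [j rX] := proj1 (P_lt_infP X) PX.
apply/P_lt_succP; exists k; split=> //.
exact: FP_pd_fgproj_res (fgproj_res_FP k rX) pdX.
Qed.

Lemma lfPD_n_projective_mono n : lfPD_le R n ->
  forall m, gt_inf m n -> forall M, n_projective m M -> n_projective n M.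
Proof.
case: n => [k|] lfPD m; last by case: m.
move=> _ M; apply: n_projective_mono => X PX.
apply: P_lt_succ_lfPD lfPD _; apply/P_lt_infP.
by have /P_lt_succP[j [_ rX]] := PX; exists j.
Qed.

Lemma n_projective_succ_lfPD n :
  (forall M, n_projective (succinf n) M -> n_projective n M) -> lfPD_le R n.
Proof.
case: n => [k|] nproj M //= /P_lt_infP[j rM]; apply/pd_leP.
elim: j M rM => [|j IH] M rM.
  by apply: (pd_res_pad (leq0n k)); exact: fgproj_res_pd rM.
have [P [K [f [g [PP [fg rK]]]]]] := rM.
have pdK : fgproj_res k K by apply: FP_pd_fgproj_res (IH _ rK); exact: fgproj_res_FP rK.
have Mproj : n_projective (Some k) M.
  apply/nproj/P_lt_succ_n_projective/P_lt_succP; exists k.+1; split; first exact: ltnSn.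
  by exists P, K, f, g; do 2 split=> //.
have [X [/P_lt_succP[jX [jXk rX]] MX]] :=
  n_projective_retract (FP_fgen (fgproj_res_FP 0 rM)) Mproj.
by apply: pd_res_retract MX _; apply: pd_res_pad jXk _; exact: fgproj_res_pd rX.
Qed.

Lemma fin_pres_P_lt_succ n F : left_coherent R -> fin_pres F -> pd_lt_succ F n ->
  P_lt_succ n F.
Proof.
move=> coh /fin_presP FPF; have FP_F k : FP k F := coherent_FP coh k FPF.
case: n => [k|[k]] /pd_leP pdF; apply/P_lt_succP.
all: by exists k; split=> //; exact: FP_pd_fgproj_res.
Qed.

Section PureProjective.
Variable n : natinf.
Hypothesis pure_nproj : forall M, pure_projective M -> n_projective n M.

Lemma fin_pres_retract F : fin_pres F -> exists X, P_lt_succ n X /\ retract F X.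
Proof.
move=> Ffp; apply: n_projective_retract; first exact: FP_fgen (proj1 (fin_presP F) Ffp).
by apply: pure_nproj => A B C f g [_ hF]; exact: hF.
Qed.

Lemma pure_projective_coherent : left_coherent R.
Proof.
move=> I io io_inj fI; pose Q := quotm (imS io).
have ses := coker_short_exact io_inj.
have FPQ : FP 1 Q.
  exists (R^o : lmodType R), I, io, \pi_Q; split; first exact: fgproj_regular.
  by split=> //; exact/fin_genP.
have [X [/P_lt_succP[j [_ rX]] QX]] := fin_pres_retract (proj2 (fin_presP Q) FPQ).
have FP2Q : FP 2 Q by apply: FP_retract QX _; exact: fgproj_res_FP rX.
by apply/fin_presP; exact: FP_syzygy FP2Q (fgproj_regular R) ses.
Qed.

Lemma pure_projective_pd F : fin_pres F -> pd_lt_succ F n.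
Proof.
move=> Ffp; have [X [/P_lt_succP[j [jn rX]] FX]] := fin_pres_retract Ffp.
have pdF : pd_res j F by apply: pd_res_retract FX _; exact: fgproj_res_pd rX.
case: n jn => [k|] jn /=; last by exists j; apply/pd_leP.
by apply/pd_leP; exact: pd_res_pad jn pdF.
Qed.

End PureProjective.

Lemma coherent_pure_projective n : left_coherent R ->
  (forall M, fin_pres M -> pd_lt_succ M n) ->
  forall M, pure_projective M -> n_projective n M.
Proof.
move=> coh pd M Mpure A B C f g [fg hX]; apply: Mpure; split=> // F Ffp.
by apply: hX; apply: fin_pres_P_lt_succ coh Ffp (pd F Ffp).
Qed.

End MainArgument.

Theorem corollary3p8 (R : pzRingType) (n : natinf) :
  (* part (1) *)
  ((lfPD_le R n <->
      (forall M : lmodType R, n_projective (succinf n) M -> n_projective n M)) /\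
   (lfPD_le R n <->
      (exists m : natinf, gt_inf m n /\
         forall M : lmodType R, n_projective m M -> n_projective n M)) /\
   (lfPD_le R n <->
      (forall m : natinf, gt_inf m n ->
         forall M : lmodType R, n_projective m M -> n_projective n M)) /\
   (lfPD_le R n <->
      (forall M : lmodType R, n_projective None M -> n_projective n M))) /\
  (* part (2) *)
  ((left_coherent R /\ (forall M : lmodType R, fin_pres M -> pd_lt_succ M n)) <->
   (forall M : lmodType R, pure_projective M -> n_projective n M)).
Proof.
have a_d := @lfPD_n_projective_mono R n.
have b_a := @n_projective_succ_lfPD R n.
split.
  split; [|split; [|split]].
  - by split=> [/a_d ad M|/b_a //]; exact: ad _ (gt_inf_succ n) M.
  - split=> [/a_d ad|[m [mn mP]]].
      by exists (succinf n); split; [exact: gt_inf_succ|exact: ad _ (gt_inf_succ n)].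
    by apply: b_a => M /(n_projective_gt_succ mn); exact: mP.
  - by split=> [/a_d //|d]; apply: b_a; exact: d _ (gt_inf_succ n).
  - split=> [/a_d ad|e]; first exact: ad _ (gt_inf_None n).
    by apply: b_a => M /(n_projective_gt_succ (gt_inf_None n)); exact: e.
split=> [[coh pd]|pure]; first exact: coherent_pure_projective.
by split; [exact: pure_projective_coherent pure|exact: pure_projective_pd pure].
Qed.
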